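(* With the notation of the context, let $\mathcal{P}$ be a unital partition of $G=\mu_{p^n}$ ($p$ an odd prime) and $0\le k\le n$ such that $\mathcal{P}_k\cap\mathcal{P}_l=\emptyset$ for all $l\ne k$. Then $B_{i,k}=A_{i,k}$ for all $i$.
   Context: A unital partition of a finite commutative group $G$ is a partition $G=\{1\}\sqcup A_0\sqcup\dots\sqcup A_s$ such that, with $a_i=\sum_{x\in A_i}x\in\mathbb{Z}[G]$, the $\mathbb{Z}$-span of $1$ and the $a_i$ is closed under multiplication in $\mathbb{Z}[G]$. Fix $\alpha$ an integer generating $(\mathbb{Z}/p^n\mathbb{Z})^\times$. $B_k=\{x^{p^k}\mid x\text{ a generator of }G\}$, $\mathcal{P}_k=\{A\in\mathcal{P}\mid A\cap B_k\neq\emptyset\}$. Fix $A\in\mathcal{P}_k$, $y\in A\cap B_k$; $u_k$ is the smallest positive integer with $y^{\alpha^{u_k}}\in A$, $\beta_k=\alpha^{u_k}$, $r_k+1=\phi(p^{n-k})/u_k$. For $X\subseteq G$, $X^m=\{x^m:x\in X\}$. $A_{i,k}=A^{\alpha^i}$, $B_{0,k}=\{y,y^{\beta_k},\dots,y^{\beta_k^{r_k}}\}$, $B_{i,k}=B_{0,k}^{\alpha^i}$. *)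

From HB Require Import structures.
From mathcomp Require Import all_boot all_order all_algebra all_fingroup all_solvable.
Set Implicit Arguments. Unset Strict Implicit. Unset Printing Implicit Defensive.
Import GRing.Theory.

Local Open Scope group_scope.

(* Elements of the group ring Z[G] are represented as functions gT -> int
   (supported in G). *)
Section GroupRing.
Variable gT : finGroupType.

Definition gr_ind (A : {set gT}) : gT -> int := fun g => Posz ((g \in A) : nat).

Definition gr_mul (f h : gT -> int) : gT -> int :=
  fun g => (\sum_(x : gT) f x * h ((x^-1 * g)%g))%R.

Definition gr_in_span (P : {set {set gT}}) (f : gT -> int) : Prop :=
  exists (c0 : int) (c : {set gT} -> int),
    forall g, f g = (c0 * gr_ind [set 1%g] g + \sum_(C in P) c C * gr_ind C g)%R.

Definition unital_partition (G : {group gT}) (P : {set {set gT}}) : Prop :=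
  partition P (G :\ 1) /\
  forall f h, gr_in_span P f -> gr_in_span P h -> gr_in_span P (gr_mul f h).

Definition set_pow (X : {set gT}) (m : nat) : {set gT} := [set x ^+ m | x in X].

Definition Bk (G : {group gT}) (p k : nat) : {set gT} :=
  [set x ^+ (p ^ k) | x in [set x in G | generator G x]].

Definition Pk (G : {group gT}) (P : {set {set gT}}) (p k : nat) : {set {set gT}} :=
  [set A in P | A :&: Bk G p k != set0].

End GroupRing.

From HB Require Import structures.
From mathcomp Require Import all_boot all_order all_algebra all_fingroup all_solvable.
Set Implicit Arguments. Unset Strict Implicit. Unset Printing Implicit Defensive.
Local Open Scope group_scope.

(* Proof of Corollary 3.9.  For X ⊆ G write a_X for its indicator in Z[G].
   1. The coefficient of g in a_X^m counts the m-tuples of elements of X with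
      product g.  If G is abelian and q is a prime not dividing |G|, the cyclic
      shift of q-tuples is an action of a q-group whose fixed points are the
      constant tuples, so this count is congruent to [g ∈ X^q] modulo q.
   2. For a unital partition P, a union X of blocks has a_X in the span, hence
      so do its powers, and elements of the span are constant on blocks.  With
      step 1, X^q is again a union of blocks; by induction on the prime
      factorisation the same holds for X^e whenever e is coprime to |G|.
      Hence a block containing z and z^e satisfies A^e = A.
   3. For G cyclic of order p^n: the exponents j with y^(alpha^j) in the block
      A are exactly the multiples of u; every element of G lies in some B_l,
      so the disjointness hypothesis puts all of A in B_k; two elements of B_k
      differ by a unit exponent, i.e. by a power of alpha.  Since y has order
      dividing p^(n-k), Euler's theorem makes the beta-orbit of y periodic of
      period r+1, and B_0 = A follows. *)

Section TupleCount.
Variable gT : finGroupType.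
Implicit Types (X : {set gT}) (g : gT).

Fixpoint gr_pow X (m : nat) : gT -> int :=
  if m is m'.+1 then gr_mul (gr_ind X) (gr_pow X m') else gr_ind [set 1].

Definition tuple_count X (m : nat) g : nat :=
  (\sum_(t : m.-tuple gT) (all [in X] t && ((\prod_(x <- t) x)%g == g)))%N.

Lemma sum_tuple_cons (T : finType) m (F : m.+1.-tuple T -> nat) :
  (\sum_(t : m.+1.-tuple T) F t = \sum_(x : T) \sum_(t : m.-tuple T) F [tuple of x :: t])%N.
Proof.
rewrite pair_big /= (reindex (fun u : T * m.-tuple T => [tuple of u.1 :: u.2])) //=.
exists (fun t : m.+1.-tuple T => (thead t, [tuple of behead t])) => [[x t] _|t _] /=.
  by congr (_, _); apply: val_inj.
by rewrite [t in RHS]tuple_eta; apply: val_inj.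
Qed.

Lemma gr_pow_count X m g : gr_pow X m g = Posz (tuple_count X m g).
Proof.
elim: m g => [|m IH] g /=.
  rewrite /tuple_count /gr_ind inE.
  rewrite (eq_bigr (fun _ => (1 == g) : nat)); last by move=> t _; rewrite tuple0 big_nil.
  by rewrite sum_nat_const card_tuple expn0 mul1n eq_sym.
rewrite /gr_mul /tuple_count sum_tuple_cons (big_morph Posz PoszD (erefl (Posz 0))).
apply: eq_bigr => x _; rewrite IH /tuple_count /gr_ind -PoszM big_distrr /=.
congr Posz; apply: eq_bigr => t _ /=; rewrite big_cons.
case: (x \in X) => //=; rewrite mul1n; congr (nat_of_bool (_ && _)).
by apply/eqP/eqP => E; [rewrite E mulKVg | rewrite -E mulKg].
Qed.

Lemma tuple_count_card X m g :
  tuple_count X m g = #|[set t : m.-tuple gT | all [in X] t && ((\prod_(x <- t) x)%g == g)]|.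
Proof. by rewrite -sum1dep_card big_mkcond; apply: eq_bigr => t _; case: ifP. Qed.

End TupleCount.

Definition rot1_tuple (T : finType) q (t : q.-tuple T) : q.-tuple T := [tuple of seq.rot 1 t].

Lemma rot1_tuple_inj (T : finType) q : injective (@rot1_tuple T q).
Proof. by move=> t1 t2 /(congr1 val)/rot_inj/val_inj. Qed.

Lemma rot1_fixed_nseq (T : eqType) (a : T) (s : seq T) :
  seq.rot 1 (a :: s) = a :: s -> s = nseq (size s) a.
Proof.
rewrite rot1_cons; elim: s => //= b s IH [-> E]; congr (_ :: _).
by apply: IH; rewrite E.
Qed.

Lemma rot1_nseq (T : eqType) n (a : T) : seq.rot 1 (nseq n a) = nseq n a.
Proof. by case: n => //= n; rewrite rot1_cons; elim: n => //= n ->. Qed.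

Lemma prod_nseq (gT : finGroupType) n (x : gT) : \prod_(i <- nseq n x) i = x ^+ n.
Proof. by elim: n => [|n IH]; rewrite ?big_nil ?expg0 // big_cons IH expgS. Qed.

Lemma prod_rot1 (gT : finGroupType) (G : {group gT}) (s : seq gT) :
  abelian G -> all [in G] s -> \prod_(i <- seq.rot 1 s) i = \prod_(i <- s) i.
Proof.
move=> /centsP cGG; case: s => // a s /= /andP[Ga Gs].
rewrite rot1_cons big_rcons big_cons; apply: cGG Ga.
by rewrite big_seq; apply: group_prod => i; apply: (allP Gs).
Qed.

Lemma expg_coprime_inj (gT : finGroupType) (G : {group gT}) q x y :
  coprime #|G| q -> x \in G -> y \in G -> x ^+ q = y ^+ q -> x = y.
Proof. by move=> co Gx Gy E; rewrite -(expgK co Gx) E expgK. Qed.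

(* The shift generates a
   q-group acting on these tuples, whose fixed points are the constant
   tuples (x,...,x) with x^q = g; there is at most one such x. *)
Section CountModPrime.
Variables (gT : finGroupType) (G : {group gT}) (X : {set gT}) (q : nat) (g : gT).
Hypotheses (abG : abelian G) (sXG : X \subset G) (q_pr : prime q) (coGq : coprime #|G| q).

Let S := [set t : q.-tuple gT | all [in X] t && ((\prod_(x <- t) x)%g == g)].
Let shift := perm (@rot1_tuple_inj gT q).

Let iter_shift i t : i <= q -> val (iter i shift t) = seq.rot i t.
Proof.
elim: i t => [|i IH] t le_iq; first by rewrite rot0.
by rewrite iterS permE /= IH ?(ltnW le_iq) // -rotS // size_tuple.
Qed.

Let shift_qgroup : q.-group <[shift]>.
Proof.
rewrite /pgroup -orderE; apply: pnat_dvd (pnat_id q_pr).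
rewrite order_dvdn; apply/eqP/permP => t; rewrite permX perm1.
by apply: val_inj; rewrite iter_shift // -{1}(size_tuple t) rot_size.
Qed.

Let shift_acts : [acts <[shift]>, on S | 'P].
Proof.
rewrite cycle_subG; apply/astabsP => t; rewrite /= apermE permE !inE /=.
have rot_t : perm_eq (seq.rot 1 t) t by rewrite perm_rot.
rewrite (perm_all _ rot_t); case Xt: (all [in X] t) => //=.
rewrite (prod_rot1 abG) //; apply/allP => x /(allP Xt) Xx; exact: (subsetP sXG).
Qed.

Let shift_fixed : 'Fix_(S | 'P)(<[shift]>) =
  [set nseq_tuple q x | x in [set x in X | x ^+ q == g]].
Proof.
have q_gt0 := prime_gt0 q_pr.
apply/setP => t; rewrite afix_cycle !inE sub1set inE; apply/idP/idP.
  case/andP => /andP[Xt /eqP Pt] /eqP; rewrite /= apermE permE => /(congr1 val) /=.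
  case Et: (val t) Xt Pt => [|a s] Xt Pt.
    by move: (size_tuple t); rewrite Et => q0; rewrite -q0 in q_gt0.
  move=> /rot1_fixed_nseq Es; have sz_s : size s = q.-1 by rewrite -(size_tuple t) Et.
  apply/imsetP; exists a.
    by rewrite inE -Pt big_cons Es prod_nseq -expgS sz_s prednK // eqxx andbT; case/andP: Xt.
  by apply: val_inj; rewrite /= Et Es sz_s -(prednK q_gt0).
case/imsetP => x; rewrite inE => /andP[Xx /eqP xq] ->; apply/andP; split.
  by rewrite /= all_nseq Xx orbT prod_nseq xq eqxx.
by apply/eqP; rewrite /= apermE permE; apply: val_inj; rewrite /= rot1_nseq.
Qed.

Lemma tuple_count_mod : tuple_count X q g = (g \in set_pow X q) %[mod q].
Proof.
rewrite tuple_count_card (pgroup_fix_mod shift_qgroup shift_acts) shift_fixed.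
congr (_ %% q); rewrite card_imset; last first.
  by move=> x1 x2 /(congr1 val) /=; case: (q) (prime_gt0 q_pr) => // q' _ [].
case: (boolP (g \in set_pow X q)) => [/imsetP[x0 Xx0 ->]|ng] /=.
  rewrite -(cards1 x0); apply: eq_card => x; rewrite !inE.
  apply/andP/eqP => [[Xx /eqP E]|->]; last by rewrite Xx0 eqxx.
  by apply: (expg_coprime_inj coGq) E; apply: (subsetP sXG).
apply/eqP; rewrite cards_eq0; apply/eqP/setP => x; rewrite !inE.
by apply/negP => /andP[Xx /eqP E]; case/negP: ng; apply/imsetP; exists x.
Qed.

End CountModPrime.

Lemma set_pow1 (gT : finGroupType) (X : {set gT}) : set_pow X 1 = X.
Proof.
apply/setP => x; apply/imsetP/idP => [[y Xy ->]|Xx]; first by rewrite expg1.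
by exists x; rewrite ?expg1.
Qed.

Lemma set_powM (gT : finGroupType) (X : {set gT}) a b :
  set_pow X (a * b) = set_pow (set_pow X a) b.
Proof.
apply/setP => x; apply/imsetP/imsetP => [[y Xy ->]|[w /imsetP[y Xy ->] ->]].
  by exists (y ^+ a); [apply/imsetP; exists y | rewrite expgM].
by exists y; rewrite ?expgM.
Qed.

Section Saturation.
Variables (gT : finGroupType) (G : {group gT}) (P : {set {set gT}}).
Implicit Types (X A D : {set gT}) (z : gT).

Definition saturated (X : {set gT}) : Prop :=
  forall D, D \in P -> forall z z', z \in D -> z' \in D -> (z \in X) = (z' \in X).

Hypothesis partP : partition P (G :\ 1).

Lemma block_sub A : A \in P -> A \subset G :\ 1.
Proof.
case/and3P: partP => /eqP coverP _ _ PA; rewrite -coverP.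
by apply/subsetP => x xA; apply/bigcupP; exists A.
Qed.

Lemma block_saturated A : A \in P -> saturated A.
Proof.
case/and3P: partP => _ tiP _ PA D PD z z' zD z'D.
have memA w : w \in D -> (w \in A) = (A == D).
  move=> wD; apply/idP/eqP => [wA|->] //.
  by rewrite -(def_pblock tiP PA wA) (def_pblock tiP PD wD).
by rewrite !memA.
Qed.

Lemma block_sum_coef (c : {set gT} -> int) D z :
  D \in P -> z \in D -> (\sum_(C in P) c C * gr_ind C z)%R = c D.
Proof.
case/and3P: partP => _ tiP _ PD zD.
rewrite (bigD1 D) //= /gr_ind zD GRing.mulr1 big1 ?GRing.addr0 // => C /andP[PC CD].
case zC: (z \in C); last by rewrite GRing.mulr0.
by move: CD; rewrite -(def_pblock tiP PC zC) (def_pblock tiP PD zD) eqxx.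
Qed.

Lemma span_const_on_block f D z z' :
  gr_in_span P f -> D \in P -> z \in D -> z' \in D -> f z = f z'.
Proof.
move=> [c0 [c Ef]] PD zD z'D.
have not1 w : w \in D -> w \in [set 1] = false.
  by move=> wD; have := subsetP (block_sub PD) w wD; rewrite !inE => /andP[/negbTE].
by rewrite !Ef /gr_ind !not1 // !(block_sum_coef c PD).
Qed.

Lemma saturated_in_span X :
  X \subset G :\ 1 -> saturated X -> gr_in_span P (gr_ind X).
Proof.
move=> sX satX; have /and3P[/eqP coverP tiP _] := partP.
exists 0%R, (fun C : {set gT} => Posz (C \subset X)) => g; rewrite GRing.mul0r GRing.add0r.
case: (boolP (g \in cover P)) => gP.
  have PD := pblock_mem gP; have gD : g \in pblock P g by rewrite mem_pblock.
  rewrite (block_sum_coef _ PD gD) /gr_ind; congr Posz; congr nat_of_bool.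
  apply/idP/subsetP => [gX z zD|]; last exact.
  by rewrite (satX _ PD z g zD gD).
rewrite big1 => [|C PC]; last first.
  rewrite /gr_ind; case Cg: (g \in C); last by rewrite GRing.mulr0.
  by case/negP: gP; apply/bigcupP; exists C.
rewrite /gr_ind; case gX: (g \in X) => //.
by case/negP: gP; rewrite coverP; apply: (subsetP sX).
Qed.

End Saturation.

Section UnitalSaturation.
Variables (gT : finGroupType) (G : {group gT}) (P : {set {set gT}}).
Implicit Types (X A : {set gT}) (z : gT).
Hypotheses (unitalP : unital_partition G P) (abG : abelian G).
Let partP : partition P (G :\ 1) := unitalP.1.

Lemma gr_pow_in_span X m : gr_in_span P (gr_ind X) -> gr_in_span P (gr_pow X m).
Proof.
case: unitalP => _ mulP spanX; elim: m => [|m IH] /=; last exact: mulP.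
by exists 1%R, (fun _ => 0%R) => g; rewrite GRing.mul1r big1 ?GRing.addr0.
Qed.

Lemma set_pow_sub X e :
  coprime #|G| e -> X \subset G :\ 1 -> set_pow X e \subset G :\ 1.
Proof.
move=> coGe sX; apply/subsetP => _ /imsetP[x Xx ->].
have := subsetP sX x Xx; rewrite !inE => /andP[x1 Gx].
rewrite groupX // andbT; apply: contra x1 => /eqP xe1.
by apply/eqP; apply: (expg_coprime_inj coGe) => //; rewrite xe1 expg1n.
Qed.

(* The coefficients of a_X^q are the tuple counts, constant on blocks; modulo
   q they are the 0/1 values of membership in X^q. *)
Lemma saturated_set_pow_prime X q :
  X \subset G :\ 1 -> saturated P X -> prime q -> coprime #|G| q ->
  saturated P (set_pow X q).
Proof.
move=> sX satX q_pr coGq D PD z z' zD z'D.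
have sXG : X \subset G by apply: subset_trans sX (subsetDl _ _).
have spanXq := gr_pow_in_span q (saturated_in_span partP sX satX).
have := span_const_on_block partP spanXq PD zD z'D.
rewrite !gr_pow_count => -[]; move/(congr1 (modn^~ q)).
rewrite !(tuple_count_mod _ abG sXG q_pr coGq).
rewrite !modn_small ?(leq_ltn_trans (leq_b1 _)) ?prime_gt1 //.
by do 2 case: (_ \in _).
Qed.

(* Induction on the prime factorisation of e, using X^(e'q) = (X^e')^q. *)
Lemma saturated_set_pow X e :
  X \subset G :\ 1 -> saturated P X -> 0 < e -> coprime #|G| e ->
  saturated P (set_pow X e).
Proof.
move=> sX satX; elim/ltn_ind: e => e IH e_gt0 coGe.
have [|e_gt1|->] := ltngtP e 1; last by rewrite set_pow1.
  by rewrite ltnS leqn0 => /eqP e0; rewrite e0 in e_gt0.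
have q_pr := pdiv_prime e_gt1; have q_dv := pdiv_dvd e.
set e' := e %/ pdiv e; have -> : e = (e' * pdiv e)%N by rewrite divnK.
have e'_gt0 : 0 < e' by rewrite divn_gt0 ?prime_gt0 // dvdn_leq.
have coGe' : coprime #|G| e' by apply: coprime_dvdr coGe; apply: dvdn_div.
rewrite set_powM; apply: saturated_set_pow_prime => //.
- by apply: set_pow_sub.
- by apply: IH; rewrite ?ltn_Pdiv ?prime_gt1.
- by apply: coprime_dvdr coGe.
Qed.

Lemma block_set_pow_fixed A e z :
  A \in P -> 0 < e -> coprime #|G| e -> z \in A -> z ^+ e \in A -> set_pow A e = A.
Proof.
move=> PA e_gt0 coGe zA zeA; have sA := block_sub partP PA.
have satAe := saturated_set_pow sA (block_saturated partP PA) e_gt0 coGe.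
have sAG : A \subset G by apply: subset_trans sA (subsetDl _ _).
have sub : A \subset set_pow A e.
  apply/subsetP => w wA; rewrite -(satAe A PA (z ^+ e) w zeA wA).
  by apply/imsetP; exists z.
apply/eqP; rewrite eq_sym eqEcard sub card_in_imset ?leqnn //.
by move=> x x' xA x'A; apply: (expg_coprime_inj coGe); apply: (subsetP sAG).
Qed.

End UnitalSaturation.

Section BlockOrbit.
Variables (gT : finGroupType) (G : {group gT}) (P : {set {set gT}}).
Variables (A : {set gT}) (y : gT) (alpha u : nat).
Hypotheses (unitalP : unital_partition G P) (abG : abelian G).
Hypotheses (PA : A \in P) (yA : y \in A) (coGalpha : coprime #|G| alpha).
Hypotheses (u_gt0 : 0 < u) (yu_in : y ^+ (alpha ^ u) \in A).
Hypothesis u_min : forall v, 0 < v -> v < u -> y ^+ (alpha ^ v) \notin A.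

(* alpha = 0 would put y^0 = 1 in A, which avoids 1. *)
Let alpha_gt0 : 0 < alpha.
Proof.
have := subsetP (block_sub unitalP.1 PA) _ yu_in.
by case: (alpha) => //; rewrite exp0n // expg0 !inE eqxx.
Qed.

Let alpha_exp_gt0 j : 0 < alpha ^ j.
Proof. by rewrite expn_gt0 alpha_gt0. Qed.

Let coG_alpha_exp j : coprime #|G| (alpha ^ j).
Proof. exact: coprimeXr. Qed.

Let fixed_exp j : y ^+ (alpha ^ j) \in A -> set_pow A (alpha ^ j) = A.
Proof. exact: (block_set_pow_fixed unitalP abG PA (alpha_exp_gt0 j) (coG_alpha_exp j) yA). Qed.

Let fixed_mul_u d : set_pow A (alpha ^ (u * d)) = A.
Proof.
elim: d => [|d IH]; first by rewrite muln0 expn0 set_pow1.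
by rewrite mulnS expnD mulnC set_powM IH fixed_exp.
Qed.

Lemma block_orbit_exponent j : (y ^+ (alpha ^ j) \in A) = (u %| j).
Proof.
apply/idP/idP => [yjA|/dvdnP[d ->]]; last first.
  by rewrite mulnC -(fixed_mul_u d); apply/imsetP; exists y.
have := fixed_exp yjA; rewrite (divn_eq j u) expnD [(_ %/ u * u)%N]mulnC.
rewrite set_powM fixed_mul_u => Ej.
have : y ^+ (alpha ^ (j %% u)) \in A by rewrite -Ej; apply/imsetP; exists y.
have [->|jmod_gt0] := posnP (j %% u); first by rewrite addn0 dvdn_mulr.
by rewrite (negbTE (u_min jmod_gt0 (ltn_pmod j u_gt0))).
Qed.

End BlockOrbit.

Section CyclicBk.
Variables (gT : finGroupType) (G : {group gT}) (p : nat).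

(* Two elements of B_k differ by an exponent coprime to |G|: both are the
   (p^k)-th powers of generators, and generators differ by such exponents. *)
Lemma Bk_pow_coprime k y z :
  y \in Bk G p k -> z \in Bk G p k -> exists2 b, coprime b #|G| & z = y ^+ b.
Proof.
case/imsetP=> x /setIdP[Gx genx] ->; case/imsetP=> x' /setIdP[Gx' genx'] ->.
have defG : G :=: <[x]> by apply/eqP.
move: Gx' genx'; rewrite defG => /cycleP[b ->]; rewrite generator_coprime => cob.
by exists b; rewrite ?(coprime_sym b) -?orderE // -!expgM mulnC.
Qed.

Variable n : nat.
Hypotheses (cycG : cyclic G) (p_pr : prime p) (cardG : #|G| = (p ^ n)%N).

(* Every element x^a of G = <x> lies in B_l, with l the p-valuation of a
   (and l = n when x^a = 1). *)
Lemma Bk_cover z : z \in G -> exists2 l, l <= n & z \in Bk G p l.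
Proof.
have [x defG] := cyclicP cycG; rewrite defG => /cycleP[i ->].
have ox : #[x] = (p ^ n)%N by rewrite /order -defG cardG.
have genx : x \in [set x in G | generator G x].
  by rewrite inE defG cycle_id /generator eqxx.
rewrite -expg_mod_order ox; set a := (i %% p ^ n)%N.
have [a0|a_gt0] := posnP a.
  by exists n => //; apply/imsetP; exists x; rewrite // a0 expg0 -ox expg_order.
have [b cob aE] := pfactor_coprime p_pr a_gt0; set l := logn p a in aE.
have lt_a : a < p ^ n by rewrite ltn_pmod // expn_gt0 prime_gt0.
exists l.
  rewrite -(leq_exp2l _ _ (prime_gt1 p_pr)) ltnW // (leq_ltn_trans _ lt_a) //.
  by rewrite dvdn_leq // aE dvdn_mull.
apply/imsetP; exists (x ^+ b); last by rewrite aE expgM.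
by rewrite inE defG mem_cycle generator_coprime ox coprimeXl.
Qed.

Lemma Bk_exp_period k y : k <= n -> y \in Bk G p k -> y ^+ (p ^ (n - k)) = 1.
Proof.
move=> le_kn /imsetP[x /setIdP[Gx _] ->].
by rewrite -expgM -expnD subnKC // -cardG expg_cardG.
Qed.

Lemma block_sub_Bk P k A :
  partition P (G :\ 1) ->
  (forall l, l <= n -> l != k -> Pk G P p k :&: Pk G P p l = set0) ->
  A \in Pk G P p k -> A \subset Bk G p k.
Proof.
move=> partP disjP APk; have /setIdP[PA _] := APk.
apply/subsetP => z zA; have /setD1P[_ Gz] := subsetP (block_sub partP PA) z zA.
have [l le_ln zBl] := Bk_cover Gz; have [<- //|neq_lk] := eqVneq l k.
have APl : A \in Pk G P p l by rewrite inE PA; apply/set0Pn; exists z; rewrite inE zA.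
have : A \in Pk G P p k :&: Pk G P p l by rewrite inE APk.
by rewrite disjP // inE.
Qed.

End CyclicBk.

Lemma expg_orbit_mod (gT : finGroupType) (y : gT) e m d :
  y ^+ (e ^ m) = y -> y ^+ (e ^ d) = y ^+ (e ^ (d %% m)).
Proof.
move=> ym; rewrite {1}(divn_eq d m) expnD expgM; congr (_ ^+ _).
elim: (d %/ m) => [|q IH]; first by rewrite expg1.
by rewrite mulSn expnD expgM ym IH.
Qed.

Lemma expg_euler (gT : finGroupType) (y : gT) a M :
  y ^+ M = 1 -> coprime a M -> y ^+ (a ^ totient M) = y.
Proof.
move=> yM coaM; rewrite -(expg_mod _ yM) (Euler_exp_totient coaM).
by rewrite (expg_mod _ yM) expg1.
Qed.


Unset Implicit Arguments.
Set Strict Implicit.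

Theorem corollary3p9 (gT : finGroupType) (G : {group gT}) (p n : nat)
  (hp : prime p) (hodd : odd p)
  (hcyc : cyclic G) (hcard : #|G| = (p ^ n)%N)
  (alpha : nat)
  (halpha_unit : coprime alpha (p ^ n)%N)
  (halpha_gen : forall b, coprime b (p ^ n)%N -> exists j, (b = alpha ^ j %[mod p ^ n])%N)
  (P : {set {set gT}}) (hP : unital_partition G P)
  (k : nat) (hk : k <= n)
  (hdisj : forall l, l <= n -> l != k -> Pk G P p k :&: Pk G P p l = set0)
  (A : {set gT}) (hA : A \in Pk G P p k)
  (y : gT) (hy : y \in A :&: Bk G p k)
  (u : nat) (hu_pos : 0 < u) (hu_in : y ^+ (alpha ^ u)%N \in A)
  (hu_min : forall v, 0 < v -> v < u -> y ^+ (alpha ^ v)%N \notin A) :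
  let beta := (alpha ^ u)%N in
  let r := (totient (p ^ (n - k)) %/ u - 1)%N in
  let B0 := [set y ^+ (beta ^ (nat_of_ord j))%N | j : 'I_r.+1] in
  forall i : nat, set_pow B0 (alpha ^ i)%N = set_pow A (alpha ^ i)%N.
Proof.
move=> beta r B0 i; suff -> : B0 = A by [].
have /setIdP[PA _] := hA; have /setIP[yA yBk] := hy.
have /setD1P[_ yG] := subsetP (block_sub hP.1 PA) y yA.
have coGalpha : coprime #|G| alpha by rewrite hcard coprime_sym.
have orbit := block_orbit_exponent hP (cyclic_abelian hcyc) PA yA coGalpha hu_pos hu_in hu_min.
have coM : coprime alpha (p ^ (n - k)).
  by apply: coprime_dvdr halpha_unit; rewrite dvdn_exp2l ?leq_subr.
have y_euler := expg_euler (Bk_exp_period hcard hk yBk) coM.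
have u_dvd : (u %| totient (p ^ (n - k)))%N by rewrite -orbit y_euler.
have r_succ : (u * r.+1 = totient (p ^ (n - k)))%N.
  rewrite /r subn1 prednK; first by rewrite mulnC divnK.
  by rewrite divn_gt0 // dvdn_leq // totient_gt0 expn_gt0 prime_gt0.
have beta_period : y ^+ (beta ^ r.+1) = y by rewrite -expnM r_succ.
apply/eqP; rewrite eqEsubset; apply/andP; split; apply/subsetP => z.
  by case/imsetP=> j _ ->; rewrite -expnM orbit dvdn_mulr.
move=> zA; have zBk := subsetP (block_sub_Bk hcyc hp hcard hP.1 hdisj hA) z zA.
have [b cob zE] := Bk_pow_coprime yBk zBk; rewrite hcard in cob.
have [j bj] := halpha_gen b cob.
have yn : y ^+ (p ^ n) = 1 by rewrite -hcard expg_cardG.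
have zj : z = y ^+ (alpha ^ j) by rewrite zE -(expg_mod _ yn) bj (expg_mod _ yn).
have /dvdnP[d jd] : (u %| j)%N by rewrite -orbit -zj.
apply/imsetP; exists (Ordinal (ltn_pmod d (ltn0Sn r))) => //=.
by rewrite zj jd mulnC expnM -/beta (expg_orbit_mod _ beta_period).
Qed.
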